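(* Let $x_1,\dots,x_N\in[0,1]$ with $\mu^\star:=\frac1N\sum_{i=1}^N x_i$, and let $X_1,\dots,X_N$ be a sequential random sample without replacement from $\{x_1,\dots,x_N\}$ (at each step a ballot is drawn uniformly at random from those remaining). For $\mu\in[0,1]$ and $i\in\{1,\dots,N\}$ let \[ \mathcal C_i(\mu) := \frac{N\mu - \sum_{j=1}^{i-1}X_j}{N-i+1}. \] Let $D\ge 2$ be an integer and let $(\theta_1^+,\dots,\theta_D^+)$ and $(\theta_1^-,\dots,\theta_D^-)$ be nonnegative vectors each summing to one. Define \[ M_t^{D+}(\mu) := \sum_{d=1}^D\theta_d^+\prod_{i=1}^t\Big(1+\frac{d}{(D+1)\mathcal C_i(\mu)}(X_i-\mathcal C_i(\mu))\Big), \] \[ M_t^{D-}(\mu) := \sum_{d=1}^D\theta_d^-\prod_{i=1}^t\Big(1-\frac{d}{(D+1)(1-\mathcal C_i(\mu))}(X_i-\mathcal C_i(\mu))\Big), \] and, for $\beta\in[0,1]$, $M_t^{D\pm}(\mu) := \beta M_t^{D+}(\mu)+(1-\beta)M_t^{D-}(\mu)$, with $M_0^{D\pm}(\mu):=1$. Then $(M_t^{D\pm}(\mu^\star))_{t=0}^N$ is a nonnegative martingale starting at one (with respect to the filtration generated by $X_1,\dots,X_t$). Consequently, for $\alpha\in(0,1)$, the sets \[ C_t^{\pm} := \{\mu\in[0,1] : M_t^{D\pm}(\mu)<1/\alpha\},\quad t=1,\dots,N, \] form a $(1-\alpha)$ confidence sequence for $\mu^\star$, i.e. $\mathbb P(\exists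 t\in\{1,\dots,N\} : \mu^\star\notin C_t^\pm)\le\alpha$.
   Context: $\mathcal C_i(\mu)$ is the conditional mean of $X_i$ given $X_1,\dots,X_{i-1}$ if the population mean were $\mu$. *)

From HB Require Import structures.
From mathcomp Require Import all_boot all_order all_algebra all_fingroup.
Set Implicit Arguments. Unset Strict Implicit. Unset Printing Implicit Defensive.
Import Order.TTheory GRing.Theory Num.Theory.
Local Open Scope ring_scope.

(* Sampling without replacement: the draw order is a uniformly random
   permutation sigma of 'I_N; the i-th draw (1-based, 1 <= i <= N) is
   X_i = x (sigma (i-1)).  Out of range indices give 0 (never used). *)
Definition draw (R : ringType) (N : nat) (x : 'I_N -> R) (s : 'S_N) (i : nat) : R :=
  nth 0 [seq x (s k) | k <- enum 'I_N] i.-1.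

Definition Cmean (R : fieldType) (N : nat) (x : 'I_N -> R) (s : 'S_N)
    (mu : R) (i : nat) : R :=
  (N%:R * mu - \sum_(1 <= j < i) draw x s j) / (N%:R - i%:R + 1).

(* M_t^{D+}(mu); theta is indexed by 'I_D, entry d : 'I_D standing for d.+1 *)
Definition Mplus (R : fieldType) (N D : nat) (x : 'I_N -> R) (theta : 'I_D -> R)
    (t : nat) (mu : R) (s : 'S_N) : R :=
  \sum_(d < D) theta d * \prod_(1 <= i < t.+1)
     (1 + (d.+1)%:R / ((D.+1)%:R * Cmean x s mu i) * (draw x s i - Cmean x s mu i)).

Definition Mminus (R : fieldType) (N D : nat) (x : 'I_N -> R) (theta : 'I_D -> R)
    (t : nat) (mu : R) (s : 'S_N) : R :=
  \sum_(d < D) theta d * \prod_(1 <= i < t.+1)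
     (1 - (d.+1)%:R / ((D.+1)%:R * (1 - Cmean x s mu i)) * (draw x s i - Cmean x s mu i)).

Definition Mpm (R : fieldType) (N D : nat) (x : 'I_N -> R)
    (thp thm : 'I_D -> R) (beta : R) (t : nat) (mu : R) (s : 'S_N) : R :=
  if t == 0%N then 1
  else beta * Mplus x thp t mu s + (1 - beta) * Mminus x thm t mu s.

Definition same_prefix (R : eqType) (N : nat) (X : 'S_N -> nat -> R)
    (t : nat) (s u : 'S_N) : bool :=
  all (fun j => X s j == X u j) (iota 1 t).

Definition cond_exp (R : fieldType) (N : nat) (X : 'S_N -> nat -> R)
    (t : nat) (Y : 'S_N -> R) (s : 'S_N) : R :=
  (\sum_(u | same_prefix X t s u) Y u) / #|[set u | same_prefix X t s u]|%:R.

Definition is_martingale (R : fieldType) (N : nat) (X : 'S_N -> nat -> R)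
    (M : nat -> 'S_N -> R) : Prop :=
  (forall t, (t <= N)%N -> forall s u, same_prefix X t s u -> M t s = M t u) /\
  (forall t, (t < N)%N -> forall s, cond_exp X t (M t.+1) s = M t s).

Definition unif_prob (R : fieldType) (N : nat) (E : {set 'S_N}) : R :=
  #|E|%:R / #|[set: 'S_N]|%:R.

From HB Require Import structures.
From mathcomp Require Import all_boot all_order all_algebra all_fingroup.
From mathcomp Require Import zify ring.
Import Order.TTheory GRing.Theory Num.Theory.
Local Open Scope ring_scope.
Set Implicit Arguments. Unset Strict Implicit. Unset Printing Implicit Defensive.

(* Given the first t draws, the remaining draws are exchangeable, so the
   conditional mean of X_(t+1) is C_(t+1) at the population mean, i.e. the mean
   of the ballots not yet drawn.  Hence every factor 1 + l / C (X - C) and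
   1 - l / (1 - C) (X - C) has conditional mean one, and it is nonnegative
   because 0 <= l <= 1 and X, C lie in [0,1].  Mixtures of products of such
   factors are therefore nonnegative martingales starting at one.  Stopping such
   a martingale the first time it reaches 1/alpha keeps its mean equal to one,
   which gives Ville's inequality: it ever reaches 1/alpha with probability at
   most alpha. *)

Section ConditionalExpectation.
Variables (R : numFieldType) (N : nat) (X : 'S_N -> nat -> R).

Definition prefix_measurable t (Y : 'S_N -> R) :=
  forall s u, same_prefix X t s u -> Y s = Y u.

Lemma same_prefix_refl t s : same_prefix X t s s.
Proof. exact/allP. Qed.

Lemma same_prefix_sym t s u : same_prefix X t s u -> same_prefix X t u s.
Proof. by move/allP => su; apply/allP => j /su; rewrite eq_sym. Qed.

Lemma same_prefix_trans t s u v :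
  same_prefix X t s u -> same_prefix X t u v -> same_prefix X t s v.
Proof.
move=> /allP su /allP uv; apply/allP => j j_t.
by rewrite (eqP (su j j_t)) (eqP (uv j j_t)).
Qed.

Lemma same_prefix_leq k t s u :
  (k <= t)%N -> same_prefix X t s u -> same_prefix X k s u.
Proof.
move=> kt /allP su; apply/allP => j; rewrite mem_iota => j_k.
by apply: su; rewrite mem_iota; lia.
Qed.

Lemma prefix_measurable_leq k t Y :
  (k <= t)%N -> prefix_measurable k Y -> prefix_measurable t Y.
Proof. by move=> kt Y_k s u /(same_prefix_leq kt); apply: Y_k. Qed.

Definition prefix_class t s := [set u | same_prefix X t s u].

Lemma prefix_class_eq t s u :
  same_prefix X t s u -> prefix_class t s = prefix_class t u.
Proof.
move=> su; apply/setP => v; rewrite !inE.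
apply/idP/idP; [exact: same_prefix_trans (same_prefix_sym su) | exact: same_prefix_trans su].
Qed.

Lemma card_prefix_class_gt0 t s : 0 < #|prefix_class t s|%:R :> R.
Proof. by rewrite ltr0n; apply/card_gt0P; exists s; rewrite inE same_prefix_refl. Qed.

Lemma cond_expE t Y s :
  cond_exp X t Y s = (\sum_(u in prefix_class t s) Y u) / #|prefix_class t s|%:R.
Proof. by rewrite /cond_exp; congr (_ / _); apply: eq_bigl => u; rewrite inE. Qed.

Lemma cond_exp_affine t s Y Z a b :
  (forall u, same_prefix X t s u -> Y u = a + b * Z u) ->
  cond_exp X t Y s = a + b * cond_exp X t Z s.
Proof.
move=> YZ; rewrite !cond_expE (eq_bigr (fun u => a + b * Z u)); last first.
  by move=> u; rewrite inE; apply: YZ.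
rewrite big_split /= sumr_const -mulr_sumr mulrDl -[a *+ _]mulr_natr mulfK -?mulrA //.
by rewrite gt_eqF ?card_prefix_class_gt0.
Qed.

Lemma cond_exp_fair_bet t s Y Z k c :
  cond_exp X t Z s = c ->
  (forall u, same_prefix X t s u -> Y u = 1 + k * (Z u - c)) ->
  cond_exp X t Y s = 1.
Proof.
move=> EZ YZ; rewrite (@cond_exp_affine _ _ _ Z (1 - k * c) k) ?EZ; first by ring.
by move=> u /YZ ->; ring.
Qed.

Lemma cond_exp_sum t s (I : finType) (F : I -> 'S_N -> R) :
  cond_exp X t (fun u => \sum_i F i u) s = \sum_i cond_exp X t (F i) s.
Proof. by rewrite /cond_exp exchange_big mulr_suml. Qed.

Lemma cond_exp_comb t s a b Y1 Y2 :
  cond_exp X t (fun u => a * Y1 u + b * Y2 u) s =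
  a * cond_exp X t Y1 s + b * cond_exp X t Y2 s.
Proof. by rewrite /cond_exp big_split /= -!mulr_sumr mulrDl !mulrA. Qed.

Lemma sum_mul_cond_exp t g Y : prefix_measurable t g ->
  \sum_s g s * cond_exp X t Y s = \sum_s g s * Y s.
Proof.
move=> g_t; under eq_bigr do rewrite cond_expE mulr_suml mulr_sumr.
rewrite (exchange_big_dep predT) //=; apply: eq_bigr => u _.
have class_u : forall s, (u \in prefix_class t s) = (s \in prefix_class t u).
  by move=> s; rewrite !inE; apply/idP/idP; apply: same_prefix_sym.
rewrite (eq_bigl _ _ class_u) (eq_bigr (fun _ => g u * Y u / #|prefix_class t u|%:R)).
  by rewrite sumr_const -[_ / _ *+ _]mulr_natr divfK // gt_eqF ?card_prefix_class_gt0.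
by move=> s; rewrite inE => us; rewrite -(g_t _ _ us) -(prefix_class_eq us) mulrA.
Qed.

Lemma eq_martingale (M M' : nat -> 'S_N -> R) :
  (forall t s, M t s = M' t s) -> is_martingale X M -> is_martingale X M'.
Proof.
move=> MM' [M_meas M_mart]; split=> [t tN s u su | t tN s].
  by rewrite -!MM'; apply: M_meas.
by rewrite -MM' -M_mart // /cond_exp (eq_bigr _ (fun u _ => esym (MM' t.+1 u))).
Qed.

Lemma martingale_comb a b (M1 M2 : nat -> 'S_N -> R) :
  is_martingale X M1 -> is_martingale X M2 ->
  is_martingale X (fun t s => a * M1 t s + b * M2 t s).
Proof.
move=> [M1_meas M1_mart] [M2_meas M2_mart]; split=> [t tN s u su | t tN s].
  by rewrite (M1_meas t tN s u su) (M2_meas t tN s u su).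
by rewrite cond_exp_comb M1_mart ?M2_mart.
Qed.

End ConditionalExpectation.

Section Mixture.
Variables (R : numFieldType) (N : nat) (X : 'S_N -> nat -> R).
Variables (I : finType) (theta : I -> R) (F : I -> nat -> 'S_N -> R).

Definition mixture t u := \sum_d theta d * \prod_(1 <= i < t.+1) F d i u.

Lemma mixture0 u : mixture 0 u = \sum_d theta d.
Proof. by apply: eq_bigr => d _; rewrite big_geq // mulr1. Qed.

Lemma mixture_ge0 t u : (forall d, 0 <= theta d) ->
  (forall d i, (1 <= i <= t)%N -> 0 <= F d i u) -> 0 <= mixture t u.
Proof.
move=> theta_ge0 F_ge0; apply: sumr_ge0 => d _; rewrite mulr_ge0 //.
rewrite big_nat_cond prodr_ge0 // => i /andP[/andP[i1 it] _].
by apply: F_ge0; rewrite i1.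
Qed.

Lemma mixture_martingale :
  (forall d i, (0 < i <= N)%N -> prefix_measurable X i (F d i)) ->
  (forall d t s, (t < N)%N -> cond_exp X t (F d t.+1) s = 1) ->
  is_martingale X mixture.
Proof.
move=> F_meas F_fair.
have F_known d i t s u : (0 < i <= t)%N -> (t <= N)%N ->
    same_prefix X t s u -> F d i s = F d i u.
  by move=> it tN; apply: (prefix_measurable_leq _ (F_meas d i _)); lia.
split=> [t tN s u su | t tN s].
  apply: eq_bigr => d _; congr (_ * _); apply: eq_big_nat => i i_t.
  by apply: (F_known _ _ t) => //; lia.
rewrite /mixture cond_exp_sum; apply: eq_bigr => d _.
rewrite (@cond_exp_affine _ _ _ _ _ _ (F d t.+1) 0 (theta d * \prod_(1 <= i < t.+1) F d i s)).
  by rewrite F_fair // add0r mulr1.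
move=> u su; rewrite add0r big_nat_recr //= mulrA; congr (_ * _ * _).
by apply: eq_big_nat => i i_t; apply/esym/(F_known _ _ t) => //; lia.
Qed.

End Mixture.

Section Ville.
Variables (R : realFieldType) (N : nat) (X : 'S_N -> nat -> R).
Variables (M : nat -> 'S_N -> R) (a : R).

Definition below t s := all (fun k => M k s < a) (iota 1 t).

Definition stopped T s := M 0%N s + \sum_(t < T) (below t s)%:R * (M t.+1 s - M t s).

Lemma stopped_spec T s : if below T s then stopped T s = M T s else a <= stopped T s.
Proof.
elim: T => [|T IH]; first by rewrite /stopped big_ord0 addr0.
have belowS : below T.+1 s = below T s && (M T.+1 s < a).
  by rewrite /below -[T.+1]addn1 iotaD all_cat /= andbT add1n addn1.
have stoppedS : stopped T.+1 s = stopped T s + (below T s)%:R * (M T.+1 s - M T s).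
  by rewrite /stopped big_ord_recr /= addrA.
rewrite stoppedS belowS.
case: (below T s) IH => /= [-> | IH]; last by rewrite mul0r addr0.
by rewrite mul1r addrC subrK; case: ltP.
Qed.

Hypotheses (M_mart : is_martingale X M) (M_ge0 : forall t s, (t <= N)%N -> 0 <= M t s).
Hypothesis a_ge0 : 0 <= a.

Lemma below_measurable t : (t <= N)%N -> prefix_measurable X t (fun s => (below t s)%:R).
Proof.
move=> tN s u su; suff -> : below t s = below t u by [].
apply: eq_in_all => k; rewrite mem_iota => k_t.
by rewrite (M_mart.1 k _ s u) //; [lia | apply: same_prefix_leq su; lia].
Qed.

Lemma stopped_ge0 s : 0 <= stopped N s.
Proof.
have := stopped_spec N s; case: (below N s) => [-> | ]; last exact: le_trans.
exact: M_ge0.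
Qed.

Lemma sum_stopped : \sum_s stopped N s = \sum_s M 0%N s.
Proof.
rewrite big_split /= exchange_big /= [X in _ + X]big1 ?addr0 // => t _.
have fair s : cond_exp X t (M t.+1) s = M t s by apply: M_mart.2.
rewrite (eq_bigr _ (fun s _ => mulrBr _ _ _)) sumrB.
rewrite -(@sum_mul_cond_exp _ _ X t _ (M t.+1) (below_measurable (ltnW (ltn_ord t)))).
by under eq_bigr do rewrite fair; rewrite subrr.
Qed.

Lemma ville_inequality :
  #|[set s | [exists t : 'I_N, a <= M t.+1 s]]|%:R * a <= \sum_s M 0%N s.
Proof.
set E := [set s | _]; rewrite -sum_stopped mulr_natl -sumr_const.
rewrite [leRHS](bigID (mem E)) /= -[leLHS]addr0 lerD ?sumr_ge0 //; last first.
  by move=> s _; apply: stopped_ge0.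
apply: ler_sum => s; rewrite inE => /existsP[t a_le].
have t_in : t.+1 \in iota 1 N by have := ltn_ord t; rewrite mem_iota; lia.
have := stopped_spec N s; case: ifP => // /allP /(_ _ t_in).
by rewrite ltNge a_le.
Qed.

End Ville.

Section MeanBounds.
Variable R : numFieldType.

Lemma mean01 n (F : 'I_n -> R) :
  (forall i, 0 <= F i <= 1) -> 0 <= (\sum_(i < n) F i) / n%:R <= 1.
Proof.
move=> F01; case: n F F01 => [|n] F F01; first by rewrite big_ord0 mul0r lexx ler01.
rewrite divr_ge0 ?ler0n ?sumr_ge0 //=; last by move=> i _; case/andP: (F01 i).
rewrite ler_pdivrMr ?ltr0n // mul1r.
have -> : n.+1%:R = \sum_(i < n.+1) 1 :> R by rewrite sumr_const card_ord.
by apply: ler_sum => i _; case/andP: (F01 i).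
Qed.

Lemma bet_ge0 (q c z : R) :
  0 <= q <= 1 -> 0 <= c -> 0 <= z -> 0 <= 1 + q / c * (z - c).
Proof.
move=> /andP[q0 q1] c0 z0; have [->|c_neq0] := eqVneq c 0.
  by rewrite invr0 mulr0 mul0r addr0 ler01.
have -> : 1 + q / c * (z - c) = (1 - q) + q / c * z by rewrite mulrBr divfK //; ring.
by rewrite addr_ge0 ?subr_ge0 // mulr_ge0 // divr_ge0.
Qed.

End MeanBounds.

Section Sampling.
Variables (R : numFieldType) (N : nat) (x : 'I_N -> R).

Definition pop_mean := (\sum_i x i) / N%:R.

Lemma drawE s (k : 'I_N) : draw x s k.+1 = x (s k).
Proof. by rewrite /draw /= (nth_map k) ?size_enum_ord // nth_ord_enum. Qed.

Lemma same_prefix_draw t s u j :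
  same_prefix (draw x) t s u -> (0 < j <= t)%N -> draw x s j = draw x u j.
Proof. by move=> /allP su j_t; apply/eqP/su; rewrite mem_iota; lia. Qed.

Lemma Cmean_prefix t s u mu i :
  same_prefix (draw x) t s u -> (i <= t.+1)%N -> Cmean x s mu i = Cmean x u mu i.
Proof.
move=> su it; rewrite /Cmean; congr ((_ - _) / _).
by apply: eq_big_nat => j j_i; apply: same_prefix_draw su _; lia.
Qed.

Lemma Cmean_pop_mean s t : (t < N)%N ->
  Cmean x s pop_mean t.+1 = (\sum_(k < N - t) draw x s (k + t).+1) / (N - t)%:R.
Proof.
move=> tN; rewrite /Cmean /pop_mean [N%:R * _]mulrC divfK; last by rewrite pnatr_eq0 -lt0n; lia.
have -> : \sum_i x i = \sum_(k < N) draw x s k.+1.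
  by rewrite (reindex_inj (@perm_inj _ s)); apply: eq_bigr => k _; rewrite drawE.
rewrite -(big_mkord xpredT (fun k => draw x s k.+1)) (big_cat_nat (leq0n t) (ltnW tN)) /=.
rewrite big_add1 /= addrAC subrr add0r -{1}[t]add0n big_addn big_mkord.
by rewrite -[t.+1]addn1 natrD opprD addrA subrK natrB // ltnW.
Qed.

Lemma sum_draw_exchange t k s : (t <= k < N)%N ->
  \sum_(u in prefix_class (draw x) t s) draw x u k.+1 =
  \sum_(u in prefix_class (draw x) t s) draw x u t.+1.
Proof.
move=> /andP[tk kN]; have tN := leq_ltn_trans tk kN.
pose swap := tperm (Ordinal tN) (Ordinal kN).
rewrite (reindex_inj (mulgI swap)); apply: eq_big => u.
  rewrite !inE /same_prefix; apply: eq_in_all => -[|j]; rewrite mem_iota => j_t; first lia.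
  have jN : (j < N)%N by lia.
  rewrite -[j]/(nat_of_ord (Ordinal jN)) !drawE permM tpermD //.
    by apply/eqP => /(congr1 val) /=; lia.
  by apply/eqP => /(congr1 val) /=; lia.
move=> _; rewrite -[k]/(nat_of_ord (Ordinal kN)) -[t]/(nat_of_ord (Ordinal tN)).
by rewrite !drawE permM tpermR.
Qed.

Lemma cond_exp_draw t s : (t < N)%N ->
  cond_exp (draw x) t (fun u => draw x u t.+1) s = Cmean x s pop_mean t.+1.
Proof.
move=> tN; set P := prefix_class (draw x) t s; set c := Cmean x s pop_mean t.+1.
set S := \sum_(u in P) draw x u t.+1.
have Nt_neq0 : (N - t)%:R != 0 :> R by rewrite pnatr_eq0 -lt0n subn_gt0.
have sum_remaining : \sum_(u in P) \sum_(k < N - t) draw x u (k + t).+1 = (N - t)%:R * S.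
  rewrite exchange_big /= (eq_bigr (fun _ => S)) ?sumr_const ?card_ord ?mulr_natl //.
  by move=> k _; apply: sum_draw_exchange; have := ltn_ord k; lia.
have sum_means :
    \sum_(u in P) \sum_(k < N - t) draw x u (k + t).+1 = #|P|%:R * ((N - t)%:R * c).
  rewrite (eq_bigr (fun _ => (N - t)%:R * c)) => [|u].
    by rewrite sumr_const [#|P|%:R * _]mulr_natl.
  rewrite inE => su; rewrite /c (Cmean_prefix _ su) // Cmean_pop_mean //.
  by rewrite mulrCA mulfV ?mulr1.
have S_eq : S = #|P|%:R * c by apply: (mulfI Nt_neq0); rewrite -sum_remaining sum_means mulrCA.
by rewrite cond_expE -/P -/S S_eq mulrC mulKf // gt_eqF ?card_prefix_class_gt0.
Qed.

Hypothesis x01 : forall i, 0 <= x i <= 1.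

Lemma draw01 s j : 0 <= draw x s j <= 1.
Proof.
rewrite /draw; have [j_lt|j_ge] := ltnP j.-1 (size [seq x (s k) | k <- enum 'I_N]).
  by have /mapP[k _ ->] := mem_nth 0 j_lt; apply: x01.
by rewrite nth_default // lexx ler01.
Qed.

Lemma pop_mean01 : 0 <= pop_mean <= 1.
Proof. exact: mean01. Qed.

Lemma Cmean01 s i : (0 < i <= N)%N -> 0 <= Cmean x s pop_mean i <= 1.
Proof. by case: i => [//|t] tN; rewrite Cmean_pop_mean //; apply: mean01 => k; apply: draw01. Qed.

End Sampling.

Section Bets.
Variables (R : numFieldType) (N D : nat) (x : 'I_N -> R).

Definition bet_plus (d : 'I_D) i u : R :=
  1 + (d.+1)%:R / ((D.+1)%:R * Cmean x u (pop_mean x) i) *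
      (draw x u i - Cmean x u (pop_mean x) i).

Definition bet_minus (d : 'I_D) i u : R :=
  1 - (d.+1)%:R / ((D.+1)%:R * (1 - Cmean x u (pop_mean x) i)) *
      (draw x u i - Cmean x u (pop_mean x) i).

Lemma bet_plus_measurable d i : (0 < i)%N -> prefix_measurable (draw x) i (bet_plus d i).
Proof.
by move=> i0 s u su; rewrite /bet_plus (Cmean_prefix _ su) ?(same_prefix_draw su) ?i0 ?leqnn.
Qed.

Lemma bet_minus_measurable d i : (0 < i)%N -> prefix_measurable (draw x) i (bet_minus d i).
Proof.
by move=> i0 s u su; rewrite /bet_minus (Cmean_prefix _ su) ?(same_prefix_draw su) ?i0 ?leqnn.
Qed.

Lemma cond_exp_bet_plus d t s : (t < N)%N -> cond_exp (draw x) t (bet_plus d t.+1) s = 1.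
Proof.
move=> tN; apply: (cond_exp_fair_bet (cond_exp_draw x s tN)) => u su.
by rewrite /bet_plus -(Cmean_prefix _ su) ?leqnn.
Qed.

Lemma cond_exp_bet_minus d t s : (t < N)%N -> cond_exp (draw x) t (bet_minus d t.+1) s = 1.
Proof.
move=> tN; apply: (cond_exp_fair_bet (cond_exp_draw x s tN)) => u su.
by rewrite /bet_minus -(Cmean_prefix _ su) ?leqnn // -mulNr.
Qed.

Hypothesis x01 : forall i, 0 <= x i <= 1.

Lemma stake01 (d : 'I_D) : 0 <= ((d.+1)%:R / (D.+1)%:R : R) <= 1.
Proof. by rewrite divr_ge0 ?ler0n //= ler_pdivrMr ?ltr0n // mul1r ler_nat ltnS ltnW. Qed.

Lemma bet_plus_ge0 d i u : (0 < i <= N)%N -> 0 <= bet_plus d i u.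
Proof.
move=> iN; have /andP[C0 _] := Cmean01 x01 u iN; have /andP[X0 _] := draw01 x01 u i.
by rewrite /bet_plus invfM mulrA bet_ge0 ?stake01.
Qed.

Lemma bet_minus_ge0 d i u : (0 < i <= N)%N -> 0 <= bet_minus d i u.
Proof.
move=> iN; have /andP[_ C1] := Cmean01 x01 u iN; have /andP[_ X1] := draw01 x01 u i.
set C := Cmean _ _ _ _ in C1 *; set Xi := draw _ _ _ in X1 *.
have -> : bet_minus d i u = 1 + (d.+1)%:R / (D.+1)%:R / (1 - C) * ((1 - Xi) - (1 - C)).
  by rewrite /bet_minus -/C -/Xi invfM mulrA; ring.
by rewrite bet_ge0 ?stake01 ?subr_ge0.
Qed.

End Bets.

Theorem proposition2 (R : realFieldType) (N D : nat) (x : 'I_N -> R)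
    (thp thm : 'I_D -> R) (beta alpha : R) :
  (forall i, 0 <= x i <= 1) ->
  (2 <= D)%N ->
  (forall d, 0 <= thp d) -> \sum_(d < D) thp d = 1 ->
  (forall d, 0 <= thm d) -> \sum_(d < D) thm d = 1 ->
  0 <= beta <= 1 ->
  0 < alpha < 1 ->
  let mustar := (\sum_(i < N) x i) / N%:R in
  let M := fun t s => Mpm x thp thm beta t mustar s in
  [/\ (forall t s, (t <= N)%N -> 0 <= M t s),
      (forall s, M 0%N s = 1),
      is_martingale (draw x) M &
      @unif_prob R N [set s : 'S_N | [exists t : 'I_N,
         ~~ ((0 <= mustar <= 1) && (Mpm x thp thm beta t.+1 mustar s < alpha^-1))]]
        <= alpha].
Proof.
move=> x01 _ thp_ge0 thp1 thm_ge0 thm1 /andP[beta0 beta1] /andP[alpha0 _] mu M.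
have M_mix t s : M t s =
    beta * mixture thp (bet_plus x) t s + (1 - beta) * mixture thm (bet_minus x) t s.
  rewrite /M /Mpm; case: eqP => [-> | _] //.
  by rewrite !mixture0 thp1 thm1; ring.
have M_mart : is_martingale (draw x) M.
  apply: eq_martingale (fun t s => esym (M_mix t s)) _.
  by apply: martingale_comb; apply: mixture_martingale => *;
    [apply: bet_plus_measurable | apply: cond_exp_bet_plus
    | apply: bet_minus_measurable | apply: cond_exp_bet_minus]; lia.
have M_ge0 t s : (t <= N)%N -> 0 <= M t s.
  move=> tN; rewrite M_mix addr_ge0 // mulr_ge0 ?subr_ge0 // mixture_ge0 // => d i it;
    [apply: bet_plus_ge0 | apply: bet_minus_ge0] => //; lia.
split => //.
have alpha_inv_gt0 : 0 < alpha^-1 by rewrite invr_gt0.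
have := ville_inequality M_mart M_ge0 (ltW alpha_inv_gt0).
rewrite (eq_bigr (fun _ => 1)) // sumr_const.
have -> : [set s | [exists t : 'I_N, alpha^-1 <= M t.+1 s]] =
    [set s | [exists t : 'I_N, ~~ ((0 <= mu <= 1) && (M t.+1 s < alpha^-1))]].
  by apply/setP => s; rewrite !inE (pop_mean01 x01); apply: eq_existsb => t; rewrite leNgt.
have card_gt0 : 0 < #|'S_N|%:R :> R by rewrite ltr0n; apply/card_gt0P; exists 1%g.
by rewrite /unif_prob cardsT ler_pdivrMr // mulrC -ler_pdivrMr.
Qed.
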